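(* Fix an integer $b\geq 3$. For a positive integer $c$ and $d\in\{1,2\}$ set \[ I_{d,1}(c)=\bigcup_{j\in\mathbb{Z}}\left[\frac{b^{-j}}{db^c-2},\frac{2b^{-j}}{db^c-1}\right]\cap[0,1]. \] Then there exists $c_0$ such that for all integers $c\geq c_0$, \[ 2\mu_{ST}(I_{2,1}(c))-2\mu_{ST}(I_{1,1}(c))>\frac{1}{40}. \]
   Context: $\mu_{ST}$ denotes the Sato–Tate measure on $[-1,1]$, $d\mu_{ST}=\frac{2}{\pi}\sqrt{1-t^2}\,dt$. *)

From HB Require Import structures.
From mathcomp Require Import all_boot all_order all_algebra.
From mathcomp Require Import all_classical all_reals all_analysis.
Set Implicit Arguments. Unset Strict Implicit. Unset Printing Implicit Defensive.
Import Order.TTheory GRing.Theory Num.Theory.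
Import numFieldNormedType.Exports.
Local Open Scope classical_set_scope.
Local Open Scope ring_scope.

Definition mu_ST (R : realType) (A : set R) : \bar R :=
  let D := A `&` `[(-1 : R), 1]%classic in
  (\int[@lebesgue_measure R]_(t in D)
      ((2 / pi) * Num.sqrt (1 - t ^+ 2))%:E)%E.

Definition I_d1 (R : realType) (b d c : nat) : set R :=
  [set x : R | (0 <= x <= 1) /\
     exists j : int,
       ((b%:R : R) ^ (- j) / (d%:R * (b%:R : R) ^+ c - 2) <= x) /\
       (x <= 2 * (b%:R : R) ^ (- j) / (d%:R * (b%:R : R) ^+ c - 1))].

From HB Require Import structures.
From mathcomp Require Import all_boot all_order all_algebra.
From mathcomp Require Import all_classical all_reals all_analysis.
From mathcomp Require Import measurable_realfun.
From mathcomp Require Import lra.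
Import Order.TTheory GRing.Theory Num.Theory.
Import numFieldNormedType.Exports.
Set Implicit Arguments. Unset Strict Implicit. Unset Printing Implicit Defensive.
Local Open Scope classical_set_scope.
Local Open Scope ring_scope.

(* The Sato-Tate density (2/pi) sqrt(1 - t^2) is explicitly bounded above and
   below on short intervals, so the measure of a set is bracketed by finite step
   sums.  Write y = 1/b.  When b^c >= 1000, I_{2,1}(c) contains [0.501 y^k, y^k]
   for every k >= 0, while I_{1,1}(c) lies in the union of the windows
   [y^n, 2.01 y^n), n >= 1, hence misses the gaps [2.01 y^(n+1), y^n).  Explicit
   step sums P (from below, for I_{2,1}) and Q (from above, for I_{1,1}) satisfy
   P - Q >= 1/40 (a finer subdivision is needed for b = 3 than for b >= 4), and
   2 (2/pi) (P - Q) > 1/40 since pi < 4. *)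

Section SatoTateIntegral.
Variable R : realType.

Definition st_density (t : R) : R := 2 / pi * Num.sqrt (1 - t ^+ 2).

Definition st_integral (A : set R) : \bar R :=
  (\int[lebesgue_measure]_(t in A) (st_density t)%:E)%E.

Lemma mu_STE (A : set R) : mu_ST A = st_integral (A `&` `[-1, 1]).
Proof. by []. Qed.

Lemma st_density_ge0 (t : R) : 0 <= st_density t.
Proof. by rewrite mulr_ge0 ?sqrtr_ge0 ?divr_ge0 ?pi_ge0. Qed.

Lemma measurable_st_density (D : set R) :
  measurable_fun D (EFin \o st_density).
Proof.
apply/measurable_EFinP; apply: (measurable_funS (E := setT)) => //.
have -> : st_density =
    (fun=> 2 / pi) \* (Num.sqrt \o ((fun=> 1) - (fun t => t ^+ 2))) by [].
apply: continuous_measurable_fun => t.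
apply: continuousM; first exact: cst_continuous.
apply: continuous_comp; last exact: sqrt_continuous.
by apply: continuousB; [exact: cst_continuous | exact: exprn_continuous].
Qed.

Lemma st_integral_ge0 (A : set R) : (0 <= st_integral A)%E.
Proof. by apply: integral_ge0 => t _; rewrite lee_fin st_density_ge0. Qed.

Lemma le_st_integral (A B : set R) : measurable A -> measurable B -> A `<=` B ->
  (st_integral A <= st_integral B)%E.
Proof.
move=> mA mB AB; apply: ge0_subset_integral => //.
  exact: measurable_st_density.
by move=> t _; rewrite lee_fin st_density_ge0.
Qed.

Lemma integral_cst_itv (u v c : R) : u <= v ->
  (\int[lebesgue_measure]_(t in `[u, v[) c%:E = (c * (v - u))%:E)%E.
Proof.
move=> uv; rewrite integral_cst //= lebesgue_measure_itv /=.
case: ltP => [_|]; first by rewrite -EFinD -EFinM.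
rewrite lee_fin => vu; have -> : v = u by apply/eqP; rewrite eq_le vu uv.
by rewrite subrr mulr0 mule0.
Qed.

Lemma st_integral_itv_ge (A : set R) (u v r : R) :
  u <= v -> `[u, v[ `<=` A -> 0 <= u -> 0 <= r -> r ^+ 2 + v ^+ 2 <= 1 ->
  ((2 / pi * r * (v - u))%:E <= st_integral (A `&` `[u, v[))%E.
Proof.
move=> uv uvA u0 r0 rv; rewrite setIidr // -integral_cst_itv //.
apply: ge0_le_integral => //.
- by move=> t _; rewrite lee_fin mulr_ge0 ?divr_ge0 ?pi_ge0.
- exact: measurable_st_density.
move=> t; rewrite /= in_itv /= => /andP[ut tv].
rewrite lee_fin /st_density ler_pM2l ?divr_gt0 ?pi_gt0 //.
have t0 : 0 <= t := le_trans u0 ut.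
have v0 : 0 <= v := le_trans t0 (ltW tv).
have tv2 : t ^+ 2 <= v ^+ 2 by rewrite lerXn2r ?nnegrE //; exact: ltW.
by rewrite -(ger0_norm r0) -sqrtr_sqr ler_wsqrtr //; lra.
Qed.

Lemma st_integral_itv_le (A : set R) (u v M : R) : measurable A -> u <= v ->
  0 <= u -> 0 <= M -> 1 - u ^+ 2 <= M ^+ 2 ->
  (st_integral (A `&` `[u, v[) <= (2 / pi * M * (v - u))%:E)%E.
Proof.
move=> mA uv u0 M0 uM.
have : (st_integral (A `&` `[u, v[) <= st_integral `[u, v[)%E.
  by apply: le_st_integral (@subIsetr _ _ _) => //; exact: measurableI.
move/le_trans; apply.
rewrite -integral_cst_itv //; apply: ge0_le_integral => //.
- by move=> t _; rewrite lee_fin st_density_ge0.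
- exact: measurable_st_density.
move=> t; rewrite /= in_itv /= => /andP[ut _].
rewrite lee_fin /st_density ler_pM2l ?divr_gt0 ?pi_gt0 //.
have ut2 : u ^+ 2 <= t ^+ 2 by rewrite lerXn2r ?nnegrE ?(le_trans u0).
by rewrite -(ger0_norm M0) -sqrtr_sqr ler_wsqrtr //; lra.
Qed.

Lemma st_integral_itv_split (A : set R) (u v w : R) :
  measurable A -> u <= v -> v <= w ->
  st_integral (A `&` `[u, w[) =
    (st_integral (A `&` `[u, v[) + st_integral (A `&` `[v, w[))%E.
Proof.
move=> mA uv vw.
have -> : `[u, w[%classic = `[u, v[ `|` `[v, w[.
  by rewrite (@itv_bndbnd_setU _ _ _ (BLeft v)).
rewrite /st_integral setIUr ge0_integral_setU //.
- exact: measurableI.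
- exact: measurableI.
- by rewrite -setIUr; apply: measurable_st_density.
- by move=> t _; rewrite lee_fin st_density_ge0.
apply/disj_setPS => t [[_]]; rewrite /= !in_itv /= => /andP[_ tv] [_ /andP[vt _]].
by move: (lt_le_trans tv vt); rewrite ltxx.
Qed.

(* A list [:: (v1, h1); ...; (vn, hn)] read from a start point u = v0 describes
   the intervals [v(i-1), vi[ together with heights hi.  [Some r] comes with
   conditions ensuring that the density is at least, resp. at most, (2/pi) r on
   the interval ([lower_step], resp. [upper_step]); [None] contributes 0: the
   interval is dropped from a lower bound, and must miss the set in an upper
   bound. *)
Fixpoint step_chain (P : R -> R -> option R -> Prop) (u : R)
    (l : seq (R * option R)) : Prop :=
  if l is (v, h) :: l' then [/\ u <= v, P u v h & step_chain P v l'] else True.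

Fixpoint step_sum (u : R) (l : seq (R * option R)) : R :=
  if l is (v, h) :: l' then odflt 0 h * (v - u) + step_sum v l' else 0.

Definition lower_step (A : set R) (u v : R) (h : option R) : Prop :=
  if h is Some r then [/\ `[u, v[ `<=` A, 0 <= u, 0 <= r & r ^+ 2 + v ^+ 2 <= 1]
  else True.

Definition upper_step (A : set R) (u v : R) (h : option R) : Prop :=
  if h is Some M then [/\ 0 <= u, 0 <= M & 1 - u ^+ 2 <= M ^+ 2]
  else A `&` `[u, v[ = set0.

Lemma step_chain_le_last P u l : step_chain P u l -> u <= last u (unzip1 l).
Proof.
elim: l u => [|[v h] l IHl] u //= [uv _ /IHl]; exact: le_trans.
Qed.

Lemma st_integral_ge_step_sum (A : set R) (u : R) l : measurable A ->
  step_chain (lower_step A) u l ->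
  ((2 / pi * step_sum u l)%:E <= st_integral (A `&` `[u, last u (unzip1 l)[))%E.
Proof.
move=> mA; elim: l u => [|[v h] l IHl] u /=; first by rewrite mulr0 st_integral_ge0.
move=> [uv hstep hl]; rewrite (st_integral_itv_split mA uv (step_chain_le_last hl)).
rewrite mulrDr EFinD leeD ?IHl //.
case: h hstep => [r [uvA u0 r0 rv]|_] /=.
  by rewrite mulrA st_integral_itv_ge.
by rewrite mul0r mulr0 st_integral_ge0.
Qed.

Lemma st_integral_le_step_sum (A : set R) (u : R) l : measurable A ->
  step_chain (upper_step A) u l ->
  (st_integral (A `&` `[u, last u (unzip1 l)[) <= (2 / pi * step_sum u l)%:E)%E.
Proof.
move=> mA; elim: l u => [|[v h] l IHl] u /=.
  by rewrite mulr0 set_itvxx setI0 /st_integral integral_set0.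
move=> [uv hstep hl]; rewrite (st_integral_itv_split mA uv (step_chain_le_last hl)).
rewrite mulrDr EFinD leeD ?IHl //.
case: h hstep => [M [u0 M0 uM]|A0] /=.
  by rewrite mulrA st_integral_itv_le.
by rewrite mul0r mulr0 A0 /st_integral integral_set0.
Qed.

Record gap_certificate (A2 A1 : set R) (u0 e : R) (L U : seq (R * option R)) :
    Prop := {
  cert_start_ge0 : 0 <= u0;
  cert_lower : step_chain (lower_step A2) u0 L;
  cert_lower_end : last u0 (unzip1 L) <= 1;
  cert_upper : step_chain (upper_step A1) 0 U;
  cert_upper_end : last 0 (unzip1 U) = e;
  cert_gap : 1 / 40 <= step_sum u0 L - step_sum 0 U }.

Lemma two_over_pi_gt_half : 1 / 2 < 2 / pi :> R.
Proof.
have pi_lt4 : pi < 4 :> R by have := @pihalf_lt2 R; rewrite ltr_pdivrMr //; lra.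
by rewrite ltr_pdivlMr ?pi_gt0 //; lra.
Qed.

Lemma mu_ST_gap (A2 A1 : set R) (u0 e : R) L U :
  measurable A2 -> measurable A1 -> A1 `<=` `[0, e[ ->
  gap_certificate A2 A1 u0 e L U ->
  ((1 / 40 : R)%:E < 2%:E * mu_ST A2 - 2%:E * mu_ST A1)%E.
Proof.
move=> mA2 mA1 A1e [u00 lowL Lle1 upU Ue gap].
have lowA2 : ((2 / pi * step_sum u0 L)%:E <= mu_ST A2)%E.
  rewrite mu_STE; apply: le_trans (st_integral_ge_step_sum mA2 lowL) _.
  apply: le_st_integral; [exact: measurableI..|].
  move=> x [A2x]; rewrite /= !in_itv /= => /andP[u0x xL]; split => //.
  by apply/andP; split; lra.
have upA1 : (mu_ST A1 <= (2 / pi * step_sum 0 U)%:E)%E.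
  rewrite mu_STE; apply: le_trans (st_integral_le_step_sum mA1 upU); rewrite Ue.
  apply: le_st_integral; [exact: measurableI..|].
  by move=> x [A1x _]; split => //; exact: A1e.
have := st_integral_ge0 (A1 `&` `[-1, 1]); rewrite -mu_STE.
have := two_over_pi_gt_half; move: (2 / pi) lowA2 upA1 => k.
case: (mu_ST A1) => [m1| |] //; case: (mu_ST A2) => [m2| |] //.
- rewrite !lee_fin -!EFinM -EFinB lte_fin => lo up k_gt _.
  have : 0 <= k * (step_sum u0 L - step_sum 0 U - 1 / 40) by apply: mulr_ge0; lra.
  lra.
- by move=> _ _ _ _; rewrite mulry gtr0_sg // mul1e -EFinM addye ?ltry.
Qed.

End SatoTateIntegral.

Section IntervalsOfI.
Variable R : realType.

Lemma measurable_I_d1 (b d c : nat) : measurable (@I_d1 R b d c).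
Proof.
set lo := fun j : int => (b%:R : R) ^ (- j) / (d%:R * (b%:R : R) ^+ c - 2).
set hi := fun j : int => 2 * (b%:R : R) ^ (- j) / (d%:R * (b%:R : R) ^+ c - 1).
have -> : @I_d1 R b d c = `[0, 1] `&`
    \bigcup_(n in [set: nat]) (`[lo n%:Z, hi n%:Z] `|` `[lo (- n%:Z), hi (- n%:Z)]).
  apply/seteqP; split => x.
    move=> [x01 [[n|n] [lox xhi]]]; split; rewrite /= ?in_itv //=.
      by exists n => //; left; rewrite /= in_itv /= lox xhi.
    by exists n.+1 => //; right; rewrite /= in_itv /= -NegzE lox xhi.
  rewrite /= in_itv /= => -[x01 [n _ []]]; rewrite /= in_itv /= => /andP[lox xhi].
    by split => //; exists n%:Z.
  by split => //; exists (- n%:Z).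
apply: measurableI; first exact: measurable_itv.
by apply: bigcupT_measurable => n; apply: measurableU; exact: measurable_itv.
Qed.

Lemma I_d1_2_window (B w x : R) : 501 <= B -> 0 <= w ->
  501 / 1000 * w <= x -> x <= w ->
  B * w / (2 * B - 2) <= x /\ x <= 2 * (B * w) / (2 * B - 1).
Proof.
move=> B_ge w0 wx xw.
split; [rewrite ler_pdivrMr; last lra | rewrite ler_pdivlMr; last lra].
- have : 0 <= (x - 501 / 1000 * w) * (2 * B - 2) by apply: mulr_ge0; lra.
  have : 0 <= w * (B - 501) by apply: mulr_ge0; lra.
  lra.
- have : 0 <= (w - x) * (2 * B - 1) by apply: mulr_ge0; lra.
  have : 0 <= w * B by apply: mulr_ge0; lra.
  lra.
Qed.

Lemma I_d1_1_window (B w x : R) : 1000 <= B -> 0 < w ->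
  B * w / (B - 2) <= x -> x <= 2 * (B * w) / (B - 1) -> w < x < 201 / 100 * w.
Proof.
move=> B_ge w0; rewrite ler_pdivrMr ?ler_pdivlMr; try lra.
move=> lox xhi; apply/andP; split.
  have : 0 < w * 2 by lra.
  nra.
have : 0 < w * (B - 201) by apply: mulr_gt0; lra.
nra.
Qed.

Section IntervalStructure.
Variables (b c : nat).
Hypothesis b_gt0 : (0 < b)%N.
Hypothesis bc_ge : 1000 <= (b%:R : R) ^+ c.
Local Notation y := ((b%:R : R)^-1).

Lemma b_exprz_shift (j : int) :
  (b%:R : R) ^ (- j) = (b%:R : R) ^+ c * (b%:R : R) ^ (- (j + c%:Z)).
Proof.
have bc_neq0 : (b%:R : R) ^+ c != 0 by rewrite expf_neq0 // pnatr_eq0 -lt0n.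
by rewrite opprD expfzDr ?pnatr_eq0 -?lt0n // -exprnN mulrCA mulfV ?mulr1.
Qed.

Lemma invb_expr_le (m n : nat) : (m <= n)%N -> y ^+ n <= y ^+ m.
Proof.
move=> mn; apply: ler_wiXn2l mn; first by rewrite invr_ge0 ler0n.
by rewrite invf_le1 ?ltr0n // ler1n.
Qed.

Lemma I_d1_2_itv (k : nat) (p q : R) :
  501 / 1000 * y ^+ k <= p -> q <= y ^+ k -> `[p, q[ `<=` @I_d1 R b 2 c.
Proof.
move=> kp qk x; rewrite /= in_itv /= => /andP[px xq].
have yk0 : 0 <= y ^+ k by rewrite exprn_ge0 // invr_ge0 ler0n.
have := invb_expr_le (leq0n k); rewrite expr0 => yk1.
split; first by apply/andP; split; lra.
have yE : (b%:R : R) ^ (- k%:Z) = y ^+ k by rewrite -exprnN -exprVn.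
exists (k%:Z - c%:Z); rewrite b_exprz_shift subrK yE.
apply: I_d1_2_window; try lra.
by apply: le_trans bc_ge; lra.
Qed.

Lemma mem_I_d1_1 (x : R) : @I_d1 R b 1 c x ->
  exists2 n : nat, (0 < n)%N & y ^+ n <= x < 201 / 100 * y ^+ n.
Proof.
move=> [/andP[x0 x1] [j]]; rewrite b_exprz_shift mul1r.
move: (j + c%:Z) => n [lox xhi].
have w0 : 0 < (b%:R : R) ^ (- n) by rewrite exprz_gt0 ?ltr0n.
have /andP[wx xw] := I_d1_1_window bc_ge w0 lox xhi.
case: n {lox xhi w0} wx xw => n; last first.
  rewrite NegzE opprK => wx _; suff : 1 <= (b%:R : R) ^ n.+1%:Z by lra.
  by rewrite exprn_ege1 // ler1n.
rewrite -exprnN -exprVn; case: n => [|n]; first by rewrite expr0; lra.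
by exists n.+1 => //; rewrite ltW.
Qed.

Lemma I_d1_1_gap (m : nat) (p q : R) :
  201 / 100 * y ^+ m.+1 <= p -> q <= y ^+ m -> @I_d1 R b 1 c `&` `[p, q[ = set0.
Proof.
move=> mp qm; apply/seteqP; split => x //= [/mem_I_d1_1 [n _ /andP[nx xn]]].
rewrite in_itv /= => /andP[px xq].
have [nm|mn] := leqP n m.
  by have := invb_expr_le nm; lra.
by have := invb_expr_le mn; lra.
Qed.

Lemma I_d1_1_sub : @I_d1 R b 1 c `<=` `[0, 201 / 100 * y[.
Proof.
move=> x /[dup] [[/andP[x0 _] _]] /mem_I_d1_1 [n n_gt0 /andP[_ xn]].
by rewrite /= in_itv /= x0 /=; have := invb_expr_le n_gt0; rewrite expr1; lra.
Qed.

End IntervalStructure.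
End IntervalsOfI.

Section Certificates.
Variables (R : realType) (A2 A1 : set R) (y : R).
Hypothesis A2_itv : forall (k : nat) (p q : R),
  501 / 1000 * y ^+ k <= p -> q <= y ^+ k -> `[p, q[ `<=` A2.
Hypothesis A1_gap : forall (m : nat) (p q : R),
  201 / 100 * y ^+ m.+1 <= p -> q <= y ^+ m -> A1 `&` `[p, q[ = set0.

(* The heights are sqrt(1 - t^2), rounded down at the right end (lower steps) or
   up at the left end (upper steps) of each interval. *)
Definition lower_steps_small : seq (R * option R) :=
  [:: (y ^+ 2, Some (99/100)); (501/1000 * y, None); (y, Some (968/1000));
      (501/1000, None); (6/10, Some (8/10)); (7/10, Some (71/100));
      (8/10, Some (6/10)); (9/10, Some (435/1000)); (1, None)].

Definition upper_steps_small : seq (R * option R) :=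
  [:: (201/100 * y ^+ 3, Some 1); (y ^+ 2, None); (201/100 * y ^+ 2, Some 1);
      (y, None); (201/100 * y, Some 1)].

Definition lower_steps_third : seq (R * option R) :=
  [:: (y ^+ 3, Some (999/1000)); (501/1000 * y ^+ 2, None);
      (y ^+ 2, Some (993/1000)); (501/1000 * y, None);
      (y, Some (471/500)); (501/1000, None);
      (3/5, Some (4/5)); (7/10, Some (357/500)); (3/4, Some (661/1000));
      (4/5, Some (599/1000)); (17/20, Some (263/500)); (9/10, Some (87/200));
      (93/100, Some (367/1000)); (24/25, Some (7/25)); (49/50, Some (99/500));
      (1, None)].

Definition upper_steps_third : seq (R * option R) :=
  [:: (201/100 * y ^+ 4, Some 1); (y ^+ 3, None); (201/100 * y ^+ 3, Some 1);
      (y ^+ 2, None); (201/100 * y ^+ 2, Some (497/500)); (y, None);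
      (2/5, Some (943/1000)); (9/20, Some (917/1000)); (1/2, Some (447/500));
      (11/20, Some (867/1000)); (3/5, Some (209/250)); (201/100 * y, Some (4/5))].

Local Ltac solve_step :=
  match goal with
  | |- _ `<=` A2 => first
      [ apply: (@A2_itv 3); lra | apply: (@A2_itv 2); lra
      | apply: (@A2_itv 1); rewrite ?expr1; lra
      | apply: (@A2_itv 0); rewrite ?expr0; lra ]
  | |- A1 `&` _ = set0 => first
      [ apply: (@A1_gap 3); lra | apply: (@A1_gap 2); lra
      | apply: (@A1_gap 1); rewrite ?expr1; lra ]
  | |- is_true _ => lra
  end.

Local Ltac solve_certificate :=
  constructor;
  cbn [step_chain lower_step upper_step step_sum odflt oapp last unzip1 map fst];
  repeat split; solve_step.

Lemma gap_certificate_small : 0 < y -> y <= 1/4 ->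
  gap_certificate A2 A1 (501/1000 * y ^+ 2) (201/100 * y)
    lower_steps_small upper_steps_small.
Proof.
move=> y_gt0 y_le.
have y2_le : y ^+ 2 <= y / 4 by rewrite expr2; nra.
have y2_ge0 : 0 <= y ^+ 2 by rewrite exprn_ge0 // ltW.
have y3_le : y ^+ 3 <= y ^+ 2 / 4 by rewrite exprS; nra.
have y3_ge0 : 0 <= y ^+ 3 by rewrite exprn_ge0 // ltW.
have y4_le : (y ^+ 2) ^+ 2 <= 1/256 by nra.
have y4_ge0 : 0 <= (y ^+ 2) ^+ 2 by rewrite exprn_ge0.
by rewrite /lower_steps_small /upper_steps_small; solve_certificate.
Qed.

Lemma gap_certificate_third : y = 1/3 ->
  gap_certificate A2 A1 (501/1000 * y ^+ 3) (201/100 * y)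
    lower_steps_third upper_steps_third.
Proof.
rewrite /lower_steps_third /upper_steps_third => y_third; subst y.
solve_certificate.
Qed.

End Certificates.

Theorem lemma3p1 (R : realType) (b : nat) (hb : (3 <= b)%N) :
  exists c0 : nat, forall c : nat, (c0 <= c)%N -> (0 < c)%N ->
    ((2%:E * mu_ST (@I_d1 R b 2 c) - 2%:E * mu_ST (@I_d1 R b 1 c))
       > (1 / 40 : R)%:E)%E.
Proof.
have b_gt0 : (0 < b)%N by apply: leq_trans hb.
exists 1000%N => c c_ge _.
have bc_ge : 1000 <= (b%:R : R) ^+ c.
  rewrite -natrX ler_nat (leq_trans c_ge) // ltnW //.
  by rewrite ltn_expl // (leq_trans _ hb).
have A2_itv := @I_d1_2_itv R b c b_gt0 bc_ge.
have A1_gap := @I_d1_1_gap R b c b_gt0 bc_ge.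
have gap := mu_ST_gap (measurable_I_d1 b 2 c) (measurable_I_d1 b 1 c)
  (I_d1_1_sub b_gt0 bc_ge).
have [b3|b_neq3] := eqVneq b 3.
  by apply: gap (gap_certificate_third A2_itv A1_gap _); rewrite b3 div1r.
have b_ge4 : (4 <= b)%N by rewrite ltn_neqAle eq_sym b_neq3 hb.
apply: gap (gap_certificate_small A2_itv A1_gap _ _).
  by rewrite invr_gt0 ltr0n.
by rewrite div1r lef_pV2 ?posrE ?ltr0n // ler_nat.
Qed.
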